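(* Let $T_1$ and $T_2$ be trees with $\gamma_P(T_1) = \gamma(T_1)$ and $\gamma_P(T_2) = \gamma(T_2)$. Then $\gamma_P(T_1 \Box T_2) \ge \gamma_P(T_1)\gamma_P(T_2)$.
   Context: $\gamma(G)$ denotes the domination number of $G$ (minimum size of a set $D$ with $N[D]=V(G)$). For $S \subseteq V(G)$: initially all vertices of $S$ and their neighbors are observed; then, repeatedly, any vertex that is the only unobserved neighbor of some observed vertex becomes observed. $S$ is a power dominating set if eventually all vertices are observed; $\gamma_P(G)$ is the minimum size of a power dominating set. The Cartesian product $G \Box H$ has vertex set $V(G)\times V(H)$, with $(g_1,h_1)$ adjacent to $(g_2,h_2)$ iff either $g_1=g_2$ and $h_1h_2 \in E(H)$, or $h_1=h_2$ and $g_1g_2\in E(G)$. *)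

From mathcomp Require Import all_boot.
Set Implicit Arguments. Unset Strict Implicit. Unset Printing Implicit Defensive.

Section Graphs.
Variable T : finType.
Variable e : rel T.

Definition simple_graph := symmetric e /\ irreflexive e.

Definition connected_graph := (0 < #|T|) /\ forall x y : T, connect e x y.

Definition acyclic_graph := forall s : seq T, uniq s -> 3 <= size s -> ~~ cycle e s.

Definition tree := [/\ simple_graph, connected_graph & acyclic_graph].

Definition closed_nbh (S : {set T}) : {set T} :=
  S :|: [set w | [exists v in S, e v w]].

Definition dominating (D : {set T}) : bool := closed_nbh D == setT.

(* domination number: minimum size of a dominating set (setT is dominating) *)
Definition gamma : nat :=
  #|[arg min_(D < setT | dominating D) #|D|]|.

Definition prop_step (M : {set T}) : {set T} :=
  M :|: [set w | [exists v in M,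
          [&& e v w, w \notin M & [forall u, (e v u && (u \notin M)) ==> (u == w)]]]].

(* final set of observed vertices starting from S (the rule is monotone, so
   #|T| rounds reach the unique closure) *)
Definition observed (S : {set T}) : {set T} := iter #|T| prop_step (closed_nbh S).

Definition power_dominating (S : {set T}) : bool := observed S == setT.

Definition gammaP : nat :=
  #|[arg min_(S < setT | power_dominating S) #|S|]|.

End Graphs.

Lemma setT_dominating (T : finType) (e : rel T) : dominating e setT.
Proof. by rewrite /dominating /closed_nbh setTU. Qed.

Definition box (T1 T2 : finType) (e1 : rel T1) (e2 : rel T2) : rel (T1 * T2) :=
  fun x y => ((x.1 == y.1) && e2 x.2 y.2) || ((x.2 == y.2) && e1 x.1 y.1).

From mathcomp Require Import all_boot.
Set Implicit Arguments. Unset Strict Implicit. Unset Printing Implicit Defensive.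

(* A fort is a nonempty vertex set into which propagation can never enter, so
   every power dominating set meets its closed neighbourhood.  A product of
   forts of G and H is a fort of G [] H, and the closed neighbourhood of the
   product lies in the product of the closed neighbourhoods; hence k forts of G
   and l forts of H with pairwise disjoint closed neighbourhoods force
   gammaP (G [] H) >= k l.  In a tree with gammaP = gamma, a minimum dominating
   set D supplies gamma such forts: a star has gamma = 1 and is itself a fort;
   otherwise every d in D has two leaf neighbours (else D minus d would already
   power dominate), and two leaves at d form a fort whose closed neighbourhood
   consists of d and its leaves. *)

Lemma iter_extensive_fixed (T : finType) (f : {set T} -> {set T}) (M : {set T}) :
  (forall A : {set T}, A \subset f A) -> f (iter #|T| f M) = iter #|T| f M.
Proof.
move=> f_ext.
have fix_or_large k : f (iter k f M) = iter k f M \/ k <= #|iter k f M|.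
  elim: k => [|k [IH|IH]] /=; [by right | by left; rewrite IH |].
  have [fixed|neq] := eqVneq (f (iter k f M)) (iter k f M); first by left; rewrite !fixed.
  by right; apply: leq_ltn_trans IH (proper_card _); rewrite properEneq eq_sym neq f_ext.
have [//|full] := fix_or_large #|T|.
have -> : iter #|T| f M = setT by apply/eqP; rewrite eqEcard subsetT cardsT.
by apply/eqP; rewrite eqEsubset subsetT f_ext.
Qed.

Section PowerDomination.
Variables (T : finType) (e : rel T).
Implicit Types (S D F M : {set T}).

Lemma in_closed_nbh1 d y : (y \in closed_nbh e [set d]) = (y == d) || e d y.
Proof.
rewrite /closed_nbh !inE; congr (_ || _).
apply/existsP/idP => [[v /andP[/[!inE]/eqP-> //]]|edy].
by exists d; rewrite inE eqxx.
Qed.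

Lemma closed_nbh_sub_observed S : closed_nbh e S \subset observed e S.
Proof.
rewrite /observed; elim: #|T| => //= n IH.
exact: subset_trans IH (subsetUl _ _).
Qed.

Lemma prop_step_observed S : prop_step e (observed e S) = observed e S.
Proof. by apply: iter_extensive_fixed => A; apply: subsetUl. Qed.

Lemma observed_forced S v w :
  v \in observed e S -> e v w ->
  (forall u, e v u -> u \notin observed e S -> u = w) -> w \in observed e S.
Proof.
move=> vO evw only_w; rewrite -prop_step_observed /prop_step !inE.
case: (boolP (w \in observed e S)) => //= wO.
apply/existsP; exists v; rewrite vO evw /=.
by apply/forallP => u; apply/implyP => /andP[evu uO]; rewrite (only_w u evu uO).
Qed.

Lemma power_dominating_setT : power_dominating e setT.
Proof.
rewrite /power_dominating eqEsubset subsetT /=.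
by apply: subset_trans (closed_nbh_sub_observed _); rewrite /closed_nbh setTU.
Qed.

Lemma gammaP_min S : power_dominating e S -> gammaP e <= #|S|.
Proof.
by rewrite /gammaP; case: arg_minnP => [|D _ D_min /D_min //]; exact: power_dominating_setT.
Qed.

Lemma gammaP_witness : exists2 S, power_dominating e S & #|S| = gammaP e.
Proof.
by rewrite /gammaP; case: arg_minnP => [|D ? _]; [exact: power_dominating_setT | exists D].
Qed.

Lemma gamma_min D : dominating e D -> gamma e <= #|D|.
Proof.
by rewrite /gamma; case: arg_minnP => [|D' _ D'_min /D'_min //]; exact: setT_dominating.
Qed.

Lemma gamma_witness : exists2 D, dominating e D & #|D| = gamma e.
Proof.
by rewrite /gamma; case: arg_minnP => [|D ? _]; [exact: setT_dominating | exists D].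
Qed.

Definition fort (F : {set T}) :=
  F != set0 /\ forall v w, v \notin F -> w \in F -> e v w ->
    exists2 w', w' \in F & (w' != w) && e v w'.

Lemma fort_disjoint_prop_step F M :
  fort F -> [disjoint F & M] -> [disjoint F & prop_step e M].
Proof.
move=> [_ F_fort] FM; rewrite -setI_eq0; apply/eqP/setP => w; rewrite /prop_step !inE.
apply/negbTE/andP => -[wF /orP[wM|/existsP[v /and4P[vM evw _ /forallP only_w]]]].
  by rewrite (disjointFr FM wF) in wM.
have [w' w'F /andP[w'w evw']] := F_fort v w (negbT (disjointFl FM vM)) wF evw.
by move: (only_w w'); rewrite evw' (disjointFr FM w'F) (negbTE w'w).
Qed.

Hypothesis e_sym : symmetric e.

Lemma disjoint_closed_nbh_swap F S :
  [disjoint closed_nbh e F & S] -> [disjoint F & closed_nbh e S].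
Proof.
move=> NF_S; rewrite -setI_eq0; apply/eqP/setP => w; rewrite inE [w \in set0]inE.
apply/negbTE/andP => -[wF]; rewrite /closed_nbh !inE => /orP[wS|/existsP[s /andP[sS esw]]].
  by move: (disjointFl NF_S wS); rewrite /closed_nbh !inE wF.
move: (disjointFl NF_S sS); rewrite /closed_nbh !inE => /norP[_ /existsP]; apply.
by exists w; rewrite wF e_sym.
Qed.

Lemma fort_meets_power_dominating F S :
  fort F -> power_dominating e S -> ~~ [disjoint closed_nbh e F & S].
Proof.
move=> F_fort S_pd; apply/negP => /disjoint_closed_nbh_swap F_NS.
have F_O : [disjoint F & observed e S].
  by rewrite /observed; elim: #|T| => //= n; exact: fort_disjoint_prop_step.
case: F_fort => /set0Pn[x xF] _.
by move: (disjointFr F_O xF); rewrite (eqP S_pd) inE.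
Qed.

Definition fort_packing (I : finType) (f : I -> {set T}) :=
  (forall i, fort (f i)) /\
  forall i j x, x \in closed_nbh e (f i) -> x \in closed_nbh e (f j) -> i = j.

Lemma fort_packing_le (I : finType) (f : I -> {set T}) S :
  fort_packing f -> power_dominating e S -> #|I| <= #|S|.
Proof.
move=> [f_fort f_disj] S_pd.
have hit i : exists s, (s \in closed_nbh e (f i)) && (s \in S).
  by move/pred0Pn: (fort_meets_power_dominating (f_fort i) S_pd) => [s s_hit]; exists s.
pose g i := xchoose (hit i).
have /(_ _)/andP gP i := xchooseP (hit i).
have g_inj : injective g.
  move=> i j gij; have [gi _] := gP i; have [gj _] := gP j.
  by apply: f_disj gi _; rewrite -/(g _) gij.
rewrite -cardsT -(card_imset _ g_inj); apply/subset_leq_card/subsetP => _ /imsetP[i _ ->].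
by have [] := gP i.
Qed.

End PowerDomination.

Section BoxProduct.
Variables (T1 T2 : finType) (e1 : rel T1) (e2 : rel T2).

Lemma box_sym : symmetric e1 -> symmetric e2 -> symmetric (box e1 e2).
Proof. by move=> sym1 sym2 x y; rewrite /box eq_sym sym2 [x.2 == _]eq_sym sym1. Qed.

Lemma fort_setX F1 F2 : fort e1 F1 -> fort e2 F2 -> fort (box e1 e2) (setX F1 F2).
Proof.
move=> [/set0Pn[a aF] F1_fort] [/set0Pn[b bF] F2_fort]; split.
  by apply/set0Pn; exists (a, b); rewrite in_setX aF bF.
move=> [x y] [x' y']; rewrite !in_setX /box /= => xy_out /andP[x'F y'F].
case/orP => /andP[/eqP eq_x e_y].
  subst x'; have yF : y \notin F2 by move: xy_out; rewrite x'F.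
  have [z zF /andP[zy' e_z]] := F2_fort y y' yF y'F e_y.
  exists (x, z); first by rewrite in_setX x'F zF.
  by rewrite /= xpair_eqE eqxx (negbTE zy') e_z.
subst y'; have xF : x \notin F1 by move: xy_out; rewrite y'F andbT.
have [z zF /andP[zx' e_z]] := F1_fort x x' xF x'F e_y.
exists (z, y); first by rewrite in_setX zF y'F.
by rewrite /= xpair_eqE eqxx (negbTE zx') e_z orbT.
Qed.

Lemma closed_nbh_box_setX F1 F2 x :
  x \in closed_nbh (box e1 e2) (setX F1 F2) ->
  (x.1 \in closed_nbh e1 F1) && (x.2 \in closed_nbh e2 F2).
Proof.
rewrite /closed_nbh !inE => /orP[/andP[-> ->] //|].
case/existsP => -[a b] /andP[]; rewrite in_setX /box /= => /andP[aF bF].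
case/orP => /andP[/eqP <- e_ab].
  by rewrite aF; apply/orP; right; apply/existsP; exists b; rewrite bF.
by rewrite bF andbT; apply/orP; right; apply/existsP; exists a; rewrite aF.
Qed.

Lemma fort_packing_box (I1 I2 : finType) (f1 : I1 -> {set T1}) (f2 : I2 -> {set T2}) :
  fort_packing e1 f1 -> fort_packing e2 f2 ->
  fort_packing (box e1 e2) (fun p : I1 * I2 => setX (f1 p.1) (f2 p.2)).
Proof.
move=> [f1_fort f1_disj] [f2_fort f2_disj]; split=> [p|p q x].
  exact: fort_setX.
move=> /closed_nbh_box_setX/andP[p1 p2] /closed_nbh_box_setX/andP[q1 q2].
by rewrite [q]surjective_pairing -(f1_disj _ _ _ p1 q1) -(f2_disj _ _ _ p2 q2) -surjective_pairing.
Qed.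

End BoxProduct.

Section Leaves.
Variables (T : finType) (e : rel T).

Definition leaf x := #|[set u | e x u]| == 1.

Lemma leaf_nbr_uniq a x y : leaf a -> e a x -> e a y -> x = y.
Proof.
case/cards1P => z nbrs_a eax eay.
have := eax; have := eay; rewrite -!(in_set (e a)) nbrs_a !inE.
by move=> /eqP-> /eqP->.
Qed.

Lemma nonleaf_other_nbr w d : ~~ leaf w -> e w d -> exists2 x, e w x & x != d.
Proof.
move=> nlw ewd.
have [/existsP[x /andP[]]|/existsPn only_d] := boolP [exists x, e w x && (x != d)].
  by exists x.
case/negP: nlw; apply/cards1P; exists d; apply/setP => x; rewrite !inE.
by apply/idP/eqP => [ewx|->//]; apply/eqP; move: (only_d x); rewrite ewx negbK.
Qed.

Definition leaf_pair d (p : T * T) :=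
  [&& e d p.1, e d p.2, leaf p.1, leaf p.2 & p.1 != p.2].

Hypothesis e_sym : symmetric e.

Lemma leaf_pair_fort d p : leaf_pair d p -> fort e [set p.1; p.2].
Proof.
case: p => a b /and5P[/= eda edb la lb ab]; split.
  by apply/set0Pn; exists a; rewrite !inE eqxx.
move=> v w; rewrite !inE negb_or => /andP[va vb] /orP[]/eqP-> evw.
  exists b; rewrite ?inE ?eqxx ?orbT // eq_sym ab.
  by rewrite (leaf_nbr_uniq la (_ : e a v) (_ : e a d)) // e_sym.
exists a; rewrite ?inE ?eqxx // ab.
by rewrite (leaf_nbr_uniq lb (_ : e b v) (_ : e b d)) // e_sym.
Qed.

Lemma closed_nbh_leaf_pair d p x : leaf_pair d p ->
  x \in closed_nbh e [set p.1; p.2] -> (x == d) || (leaf x && e d x).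
Proof.
case: p => a b /and5P[/= eda edb la lb _]; rewrite /closed_nbh !inE.
have hangs_at_d c y : leaf c -> e d c -> e c y -> y == d.
  by move=> lc edc ecy; rewrite (leaf_nbr_uniq lc ecy (_ : e c d)) // e_sym.
case/orP => [/orP[]/eqP->|/existsP[v /andP[]]]; rewrite ?la ?lb ?eda ?edb ?orbT //.
by rewrite !inE => /orP[]/eqP-> evx; rewrite (hangs_at_d _ x _ _ evx).
Qed.

Lemma leaf_pair_nonleaf d p : leaf_pair d p -> ~~ leaf d.
Proof.
by case/and5P => eda edb _ _; apply: contra => /leaf_nbr_uniq/(_ eda edb)->; rewrite eqxx.
Qed.

Lemma leaf_pair_closed_nbh_inj d d' p p' x :
  leaf_pair d p -> leaf_pair d' p' ->
  x \in closed_nbh e [set p.1; p.2] -> x \in closed_nbh e [set p'.1; p'.2] -> d = d'.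
Proof.
move=> dp d'p' /(closed_nbh_leaf_pair dp)/orP[/eqP xd|/andP[lx edx]].
  by move=> /(closed_nbh_leaf_pair d'p'); rewrite xd (negbTE (leaf_pair_nonleaf dp)) orbF => /eqP.
move=> /(closed_nbh_leaf_pair d'p')/orP[/eqP xd'|/andP[_ ed'x]].
  by move: (leaf_pair_nonleaf d'p'); rewrite -xd' lx.
by apply: (leaf_nbr_uniq lx); rewrite e_sym.
Qed.

End Leaves.

Section Tree.
Variables (T : finType) (e : rel T).
Hypothesis e_tree : tree e.

Lemma tree_sym : symmetric e. Proof. by case: e_tree => -[]. Qed.
Let e_irr : irreflexive e. Proof. by case: e_tree => -[]. Qed.

Lemma tree_no_triangle a b c : e a b -> e b c -> e c a -> False.
Proof.
move=> ab bc ca; have ne x y : e x y -> x != y by apply: contraTneq => ->; rewrite e_irr.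
case: e_tree => _ _ /(_ [:: a; b; c]).
by rewrite /= !inE negb_or (ne _ _ ab) (ne _ _ bc) eq_sym (ne _ _ ca) ab bc ca => /(_ isT isT).
Qed.

Lemma tree_no_square a b c u :
  e a b -> e b c -> e c u -> e u a -> a != c -> b != u -> False.
Proof.
move=> ab bc cu ua ac bu.
have ne x y : e x y -> x != y by apply: contraTneq => ->; rewrite e_irr.
case: e_tree => _ _ /(_ [:: a; b; c; u]).
rewrite /= !inE !negb_or (ne _ _ ab) ac eq_sym (ne _ _ ua) (ne _ _ bc) bu.
by rewrite (ne _ _ cu) ab bc cu ua => /(_ isT isT).
Qed.

Lemma nonleaf_nbr_of_not_star d :
  closed_nbh e [set d] != setT -> exists2 z, e d z & ~~ leaf e z.
Proof.
move=> not_star.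
have [/existsP[z /andP[]]|/existsPn all_leaves] := boolP [exists z, e d z && ~~ leaf e z].
  by exists z.
case/negP: not_star; rewrite eqEsubset subsetT /=; apply/subsetP => y _.
have [_ [_ /(_ d y) dy] _] := e_tree.
have closedN : closed e (closed_nbh e [set d]).
  apply: intro_closed; first exact: sym_connect_sym tree_sym.
  move=> x z; rewrite !in_closed_nbh1 => exz /orP[/eqP xd|edx]; first by rewrite -xd exz orbT.
  move: (all_leaves x); rewrite edx negbK /= => lx.
  by rewrite (leaf_nbr_uniq lx exz (_ : e x d)) ?eqxx // tree_sym.
by rewrite -(closed_connect closedN dy) in_closed_nbh1 eqxx.
Qed.

Section DeleteVertex.
Variables (D : {set T}) (d : T).
Hypothesis D_dom : dominating e D.
Hypothesis no_leaf_pair : forall p, ~~ leaf_pair e d p.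
Hypothesis not_star : closed_nbh e [set d] != setT.

Local Notation O := (observed e (D :\ d)).

Lemma unobserved_in_closed_nbh w : w \notin O -> w = d \/ e d w.
Proof.
move=> wO; have O_nbh x : x \in closed_nbh e (D :\ d) -> x \in O.
  exact/subsetP/closed_nbh_sub_observed.
have : w \in closed_nbh e D by rewrite (eqP D_dom) inE.
rewrite /closed_nbh !inE => /orP[wD|/existsP[v /andP[vD evw]]].
  have [->|wd] := eqVneq w d; first by left.
  by case/negP: wO; apply: O_nbh; rewrite /closed_nbh !inE wd wD.
have [<-|vd] := eqVneq v d; first by right.
case/negP: wO; apply: O_nbh; rewrite /closed_nbh !inE; apply/orP; right.
by apply/existsP; exists v; rewrite !inE vd vD.
Qed.

Lemma nonleaf_nbr_observed w : e d w -> ~~ leaf e w -> w \in O.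
Proof.
move=> edw nlw; have [x ewx xd] : exists2 x, e w x & x != d.
  by apply: nonleaf_other_nbr nlw _; rewrite tree_sym.
have xO : x \in O.
  apply/negPn/negP => /unobserved_in_closed_nbh[xd'|edx].
    by rewrite xd' eqxx in xd.
  by apply: (tree_no_triangle edw ewx); rewrite tree_sym.
apply: (observed_forced xO); first by rewrite tree_sym.
move=> u exu /unobserved_in_closed_nbh[ud|edu].
  by subst u; case: (tree_no_triangle edw ewx exu).
apply/eqP; apply/negPn/negP => uw.
by apply: (tree_no_square edw ewx exu); rewrite 1?eq_sym // tree_sym.
Qed.

Lemma center_observed : d \in O.
Proof.
have [z edz nlz] := nonleaf_nbr_of_not_star not_star.
apply: (observed_forced (nonleaf_nbr_observed edz nlz)); first by rewrite tree_sym.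
move=> u ezu /unobserved_in_closed_nbh[//|edu].
by case: (tree_no_triangle edz ezu); rewrite tree_sym.
Qed.

(* An unobserved vertex would be a leaf at [d]; as [d] has no two of them,
   [d] forces it. *)
Lemma power_dominating_setD1 : power_dominating e (D :\ d).
Proof.
rewrite /power_dominating eqEsubset subsetT /=; apply/subsetP => w _.
apply/negPn/negP => wO.
have [wd|edw] := unobserved_in_closed_nbh wO.
  by rewrite wd center_observed in wO.
have leafO u : e d u -> u \notin O -> leaf e u.
  by move=> edu; apply: contraR => /(nonleaf_nbr_observed edu) ->.
apply: (negP wO); apply: (observed_forced center_observed edw) => u edu uO.
apply/eqP; apply: contraNT (no_leaf_pair (u, w)) => uw.
by rewrite /leaf_pair /= edu edw uw !leafO.
Qed.

End DeleteVertex.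

Lemma tree_fort_packing :
  gammaP e = gamma e -> exists f : 'I_(gamma e) -> {set T}, fort_packing e f.
Proof.
move=> gammaP_gamma; have [D D_dom cardD] := gamma_witness e.
have [/exists_inP[d dD /eqP star]|/exists_inPn not_star] :=
  boolP [exists d in D, closed_nbh e [set d] == setT].
  have gamma1 : gamma e = 1.
    apply/eqP; rewrite eqn_leq -{1}(cards1 d) gamma_min /dominating ?star //=.
    by rewrite -cardD card_gt0; apply/set0Pn; exists d.
  rewrite gamma1; exists (fun _ => setT); split=> [_|i j x _ _]; last by rewrite !ord1.
  by split=> [|v w]; [apply/set0Pn; exists d | rewrite inE].
(* Otherwise every [d] in [D] carries two leaves: else [D :\ d] would power
   dominate, against [gammaP e = gamma e]. *)
have pairP (i : 'I_#|D|) : exists p, leaf_pair e (enum_val i) p.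
  have di := enum_valP i.
  apply/existsP; apply: contraT => /existsPn no_pair.
  have := gammaP_min (power_dominating_setD1 D_dom no_pair (not_star _ di)).
  by rewrite gammaP_gamma -cardD (cardsD1 (enum_val i) D) di ltnn.
pose p i := xchoose (pairP i).
have p_leaf i : leaf_pair e (enum_val i) (p i) := xchooseP (pairP i).
rewrite -cardD; exists (fun i => [set (p i).1; (p i).2]).
split=> [i|i j x Ni Nj]; first exact (leaf_pair_fort tree_sym (p_leaf i)).
exact/enum_val_inj/(leaf_pair_closed_nbh_inj tree_sym (p_leaf i) (p_leaf j) Ni Nj).
Qed.

End Tree.

Theorem theorem1p3 (T1 T2 : finType) (e1 : rel T1) (e2 : rel T2) :
  tree e1 -> tree e2 ->
  gammaP e1 = gamma e1 -> gammaP e2 = gamma e2 ->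
  gammaP e1 * gammaP e2 <= gammaP (box e1 e2).
Proof.
move=> tree1 tree2 eq1 eq2.
have [f1 pack1] := tree_fort_packing tree1 eq1.
have [f2 pack2] := tree_fort_packing tree2 eq2.
have [S S_pd <-] := gammaP_witness (box e1 e2).
rewrite eq1 eq2 -[gamma e1]card_ord -[gamma e2]card_ord -card_prod.
apply: fort_packing_le (fort_packing_box pack1 pack2) S_pd.
exact: box_sym (tree_sym tree1) (tree_sym tree2).
Qed.
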